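(* Let $R$ be a finite commutative Frobenius ring of characteristic $2$, let $G=\langle x\rangle$ be a finite cyclic group of order $n$ with elements listed as $g_i=x^{i-1}$ ($i=1,\dots,n$), let $v_1\neq v_2$ be elements of $RG$, and let $A$ be an $n\times n$ reverse circulant matrix over $R$. Let $C_\sigma$ be the code over $R$ generated by $$M(\sigma)=\left(\, I_{2n} \;\middle|\; \begin{matrix} \sigma(v_1) & \sigma(v_2)+A\\ \sigma(v_2)+A & \sigma(v_1)\end{matrix}\,\right).$$ Then $C_\sigma$ is a self-dual code of length $4n$ if and only if $\sigma((v_1+v_2)(v_1+v_2)^* )+A^2=I_n$ and $v_1v_2^*=v_2v_1^*$.
   Context: For $v=\sum_{g\in G}\alpha_g g\in RG$, $\sigma(v)$ is the $n\times n$ matrix over $R$ whose $(i,j)$ entry is $\alpha_{g_i^{-1}g_j}$ (so for $v=\sum_{i=0}^{n-1}\alpha_i x^i$, $\sigma(v)$ is the circulant matrix with first row $(\alpha_0,\dots,\alpha_{n-1})$). The canonical involution is $v^*=\sum_g\alpha_g g^{-1}$. An $n\times n$ matrix $(a_{ij})$ is reverse circulant if $a_{ij}$ depends only on $(i+j)\bmod n$. The code generated by a matrix is the $R$-submodule spanned by its rows; it is self-dual if it equals its dual with respect to the Euclidean inner product $\langle x,y\rangle=\sum_i x_iy_i$. *)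

From HB Require Import structures.
From mathcomp Require Import all_boot all_order all_algebra.
Set Implicit Arguments. Unset Strict Implicit. Unset Printing Implicit Defensive.
Import GRing.Theory.
Local Open Scope ring_scope.

Section Ideals.
Variable R : finComNzRingType.

Definition is_ideal (I : {set R}) : Prop :=
  [/\ (0 : R) \in I,
      (forall x y, x \in I -> y \in I -> x + y \in I) &
      (forall r x, x \in I -> r * x \in I)].

Definition minimal_ideal (I : {set R}) : Prop :=
  [/\ is_ideal I, I != [set 0] &
      forall J, is_ideal J -> J \subset I -> J = [set 0] \/ J = I].

Definition maximal_ideal (I : {set R}) : Prop :=
  [/\ is_ideal I, I != [set: R] &
      forall J, is_ideal J -> I \subset J -> J = I \/ J = [set: R]].

Definition in_jacobson (x : R) : Prop :=
  forall I, maximal_ideal I -> x \in I.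

Definition in_socle (x : R) : Prop :=
  forall I, is_ideal I -> (forall J, minimal_ideal J -> J \subset I) -> x \in I.

(* R is Frobenius iff soc(R) is isomorphic to R/J(R) as R-modules; an
   isomorphism R/J(R) -> soc(R) is the same as a generator s of soc(R)
   whose annihilator is exactly J(R). *)
Definition frobenius_ring : Prop :=
  exists s : R, (forall x, in_socle x <-> exists r, x = r * s) /\
                (forall r, r * s = 0 <-> in_jacobson r).
End Ideals.

(* ---------- group ring R[C_n] of a cyclic group of order n = m.+1 ----------
   An element v = sum_i alpha_i x^i is represented by its coefficient
   function 'I_m.+1 -> R; indices are taken in Z/(m+1) (Zp structure). *)
Definition RG (R : finComNzRingType) (m : nat) := {ffun 'I_m.+1 -> R}.

Definition rg_mul (R : finComNzRingType) m (u v : RG R m) : RG R m :=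
  [ffun k : 'I_m.+1 => \sum_(i : 'I_m.+1) u i * v (k - i)%R].

Definition rg_add (R : finComNzRingType) m (u v : RG R m) : RG R m :=
  [ffun k => u k + v k].

Definition rg_star (R : finComNzRingType) m (v : RG R m) : RG R m :=
  [ffun k : 'I_m.+1 => v (- k)%R].

(* sigma(v)_{ij} = alpha_{g_i^{-1} g_j} = alpha_{j - i}, g_i = x^(i-1) *)
Definition sigma (R : finComNzRingType) m (v : RG R m) : 'M[R]_m.+1 :=
  \matrix_(i, j) v (j - i)%R.

Definition reverse_circulant (R : finComNzRingType) m (A : 'M[R]_m.+1) : Prop :=
  forall i j i' j' : 'I_m.+1, (i + j = i' + j')%R -> A i j = A i' j'.

Definition in_code (R : finComNzRingType) k N (G : 'M[R]_(k, N)) (x : 'rV[R]_N) : Prop :=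
  exists c : 'rV[R]_k, x = c *m G.

Definition euclid (R : finComNzRingType) N (x y : 'rV[R]_N) : R :=
  \sum_(i < N) x 0 i * y 0 i.

Definition in_dual_code (R : finComNzRingType) k N (G : 'M[R]_(k, N)) (y : 'rV[R]_N) : Prop :=
  forall x, in_code G x -> euclid x y = 0.

Definition self_dual_code (R : finComNzRingType) k N (G : 'M[R]_(k, N)) : Prop :=
  forall y, in_code G y <-> in_dual_code G y.

Definition Msigma (R : finComNzRingType) m (v1 v2 : RG R m) (A : 'M[R]_m.+1)
  : 'M[R]_(m.+1 + m.+1, (m.+1 + m.+1) + (m.+1 + m.+1)) :=
  row_mx 1%:M (block_mx (sigma v1) (sigma v2 + A) (sigma v2 + A) (sigma v1)).

From HB Require Import structures.
From mathcomp Require Import all_boot all_order all_algebra.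
Set Implicit Arguments. Unset Strict Implicit. Unset Printing Implicit Defensive.
Import GRing.Theory.
Local Open Scope ring_scope.

(* A code with generator matrix (I | B), B square, is self-dual iff B B^T = -I,
   which in characteristic 2 reads B B^T = I.  The map sigma is an injective
   ring morphism from RG into matrices turning the involution * into
   transposition, and a reverse circulant A is symmetric with
   sigma(v) A = A sigma(v)^T.  Hence in characteristic 2 every cross term
   involving A cancels, and the two distinct block equations of B B^T = I for
   B = [S1, S2 + A; S2 + A, S1] become sigma((v1+v2)(v1+v2)^* ) + A^2 = I and
   v1 v2^* + v2 v1^* = 0. *)

Section Char2Module.
Variables (R : pzRingType) (V : lmodType R).
Hypothesis char2 : (2%:R : R) = 0.

Lemma addrr_lmod_char2 (v : V) : v + v = 0.
Proof. by rewrite -mulr2n -scaler_nat char2 scale0r. Qed.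

Lemma oppr_lmod_char2 (v : V) : - v = v.
Proof. by apply/eqP; rewrite eq_sym -addr_eq0 addrr_lmod_char2. Qed.

Lemma addr_eq0_lmod_char2 (u v : V) : u + v = 0 <-> u = v.
Proof.
split=> [/eqP | ->]; last exact: addrr_lmod_char2.
by rewrite addr_eq0 oppr_lmod_char2 => /eqP.
Qed.

End Char2Module.

Section SystematicCode.
Variable R : finComNzRingType.

Lemma euclidE N (x y : 'rV[R]_N) : euclid x y = (x *m y^T) 0 0.
Proof. by rewrite /euclid mxE; apply: eq_bigr => i _; rewrite mxE. Qed.

Lemma row_in_code k N (G : 'M[R]_(k, N)) i : in_code G (row i G).
Proof. by exists (delta_mx 0 i); rewrite rowE. Qed.

Lemma in_dual_codeP k N (G : 'M[R]_(k, N)) y : in_dual_code G y <-> G *m y^T = 0.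
Proof.
split=> [hy | Gy x [c ->]]; last by rewrite euclidE -mulmxA Gy mulmx0 mxE.
apply/colP => i; have := hy _ (row_in_code G i).
by rewrite euclidE -row_mul !mxE.
Qed.

Lemma self_dual_code_mul_tr k N (G : 'M[R]_(k, N)) :
  self_dual_code G -> G *m G^T = 0.
Proof.
move=> sd; apply/row_matrixP => i.
have /in_dual_codeP Gr := (sd _).1 (row_in_code G i).
by rewrite row_mul row0 -[row i G]trmxK -trmx_mul Gr trmx0.
Qed.

Lemma self_dual_row_mx1 n (B : 'M[R]_n) :
  self_dual_code (row_mx 1%:M B) <-> B *m B^T = - 1%:M.
Proof.
set G := row_mx 1%:M B.
have GGt : G *m G^T = 1%:M + B *m B^T.
  by rewrite tr_row_mx mul_row_col trmx1 mul1mx ?mulmx1.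
split=> [/self_dual_code_mul_tr | BBt y].
  by rewrite GGt addrC => /eqP; rewrite addr_eq0 => /eqP.
have BtB : B^T *m B = - 1%:M.
  by apply/eqP; rewrite -eqr_oppLR -mulNmx; apply/eqP/mulmx1C; rewrite mulmxN BBt opprK.
split=> [[c ->] | /in_dual_codeP Gy].
  by apply/in_dual_codeP; rewrite trmx_mul mulmxA GGt BBt subrr mul0mx.
have lE : lsubmx y = - (rsubmx y *m B^T).
  move: Gy; rewrite -[y]hsubmxK tr_row_mx /G mul_row_col mul1mx row_mxKl row_mxKr.
  move=> /eqP; rewrite addr_eq0 => /eqP /(congr1 trmx).
  by rewrite trmxK linearN /= trmx_mul trmxK.
exists (lsubmx y); rewrite /G mul_mx_row mulmx1 -[LHS]hsubmxK; congr row_mx.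
by rewrite lE mulNmx -mulmxA BtB mulmxN mulmx1 opprK.
Qed.

End SystematicCode.

Section BlockMatrices.
Variables (R : pzRingType) (n : nat).
Implicit Types (P Q D X : 'M[R]_n).

Lemma mul_tr_addr P Q :
  (P + Q) *m (P + Q)^T = P *m P^T + Q *m Q^T + (P *m Q^T + Q *m P^T).
Proof. by rewrite linearD /= mulmxDl !mulmxDr [Q *m P^T + _]addrC addrACA. Qed.

Lemma mul_tr_block_swap P Q :
  block_mx P Q Q P *m (block_mx P Q Q P)^T =
  block_mx (P *m P^T + Q *m Q^T) (P *m Q^T + Q *m P^T)
           (P *m Q^T + Q *m P^T) (P *m P^T + Q *m Q^T).
Proof. by rewrite tr_block_mx mulmx_block [Q *m P^T + _]addrC [Q *m Q^T + _]addrC. Qed.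

Lemma block_mx_eq1 D X : block_mx D X X D = 1%:M <-> D = 1%:M /\ X = 0.
Proof.
rewrite scalar_mx_block.
by split=> [/eq_block_mx [-> -> _ _] | [-> ->]].
Qed.

End BlockMatrices.

Section GroupRingMatrix.
Variables (R : finComNzRingType) (m : nat).
Implicit Types (u v : RG R m) (A : 'M[R]_m.+1).

Lemma sigmaD u v : sigma (rg_add u v) = sigma u + sigma v.
Proof. by apply/matrixP => i j; rewrite !mxE ffunE. Qed.

Lemma sigma_star v : sigma (rg_star v) = (sigma v)^T.
Proof. by apply/matrixP => i j; rewrite !mxE ffunE opprB. Qed.

Lemma sigmaM u v : sigma (rg_mul u v) = sigma u *m sigma v.
Proof.
apply/matrixP => i j; rewrite !mxE ffunE [RHS](reindex_inj (addIr i)) /=.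
apply: eq_bigr => k _; rewrite !mxE addrK; congr (_ * v _).
by rewrite opprD addrA addrAC.
Qed.

Lemma sigma_inj : injective (@sigma R m).
Proof. by move=> u v /matrixP eq_uv; apply/ffunP => k; have := eq_uv 0 k; rewrite !mxE subr0. Qed.

Lemma reverse_circulant_tr A : reverse_circulant A -> A^T = A.
Proof. by move=> hA; apply/matrixP => i j; rewrite mxE; apply: hA; rewrite addrC. Qed.

Lemma sigma_mul_reverse_circulant v A :
  reverse_circulant A -> sigma v *m A = A *m (sigma v)^T.
Proof.
move=> hA; apply/matrixP => i j; rewrite !mxE [RHS](reindex_inj (addIr (j - i))) /=.
apply: eq_bigr => k _; rewrite !mxE mulrC; congr (_ * _).
  by apply: hA; rewrite addrCA [i + _]addrC subrK.
by rewrite addrA addrAC addrK.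
Qed.

End GroupRingMatrix.

Theorem mainTheorem7 (R : finComNzRingType) (m : nat)
  (hFrob : frobenius_ring R) (hchar : (2%:R : R) = 0)
  (v1 v2 : RG R m) (hv : v1 != v2)
  (A : 'M[R]_m.+1) (hA : reverse_circulant A) :
  self_dual_code (Msigma v1 v2 A) <->
  (sigma (rg_mul (rg_add v1 v2) (rg_star (rg_add v1 v2))) + A *m A = 1%:M /\
   rg_mul v1 (rg_star v2) = rg_mul v2 (rg_star v1)).
Proof.
have AtA := reverse_circulant_tr hA.
have crossA v : sigma v *m A^T + A *m (sigma v)^T = 0.
  by rewrite AtA sigma_mul_reverse_circulant // addrr_lmod_char2.
set S1 := sigma v1; set S2 := sigma v2; set X := S1 *m S2^T + S2 *m S1^T.
have diagE : S1 *m S1^T + (S2 + A) *m (S2 + A)^T = S1 *m S1^T + S2 *m S2^T + A *m A.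
  by rewrite mul_tr_addr crossA addr0 AtA addrA.
have crossE : S1 *m (S2 + A)^T + (S2 + A) *m S1^T = X.
  by rewrite linearD /= mulmxDr mulmxDl addrACA crossA addr0.
have sigmaE : sigma (rg_mul (rg_add v1 v2) (rg_star (rg_add v1 v2))) =
              S1 *m S1^T + S2 *m S2^T + X.
  by rewrite sigmaM sigma_star sigmaD mul_tr_addr.
have starE : rg_mul v1 (rg_star v2) = rg_mul v2 (rg_star v1) <-> X = 0.
  split=> [eq_v | /(addr_eq0_lmod_char2 hchar) eq_S].
    by rewrite /X -!sigma_star -!sigmaM eq_v addrr_lmod_char2.
  by apply: sigma_inj; rewrite !sigmaM !sigma_star.
apply: (iff_trans (self_dual_row_mx1 _)).
rewrite oppr_lmod_char2 // mul_tr_block_swap; apply: (iff_trans (block_mx_eq1 _ _)).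
rewrite diagE crossE sigmaE.
split=> [[D1 X0] | [DX1 /starE X0]].
  by split; [rewrite X0 addr0 | exact/starE].
by split=> //; move: DX1; rewrite X0 addr0.
Qed.
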